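(* Let $r(t)\in\mathbb{R}^k$ be an RC process, let $t\in\mathbb{Z}$, $\sigma\in\Sigma$, and let $z$ be a real random variable that is a finite linear combination of the coordinates of the random vectors $z^r_v(t)$, $v\in L$. Then $E[z^2u_\sigma(t)^2]\le p_\sigma E[z^2]$.
   Context: Setting (RC framework). All random variables are on one probability space. $\Sigma$ is a finite alphabet, $\Sigma^*$ the finite words (empty word $\epsilon$), $\Sigma^+=\Sigma^*\setminus\{\epsilon\}$, $|w|$ the length. Fix reals $p_\sigma>0$ ($\sigma\in\Sigma$); $p_\epsilon=1$, $p_{\sigma_1\cdots\sigma_k}=p_{\sigma_1}\cdots p_{\sigma_k}$. Input processes are scalar processes $\{u_\sigma(t)\}_{t\in\mathbb{Z}}$, $\sigma\in\Sigma$, such that $\sum_\sigma\alpha_\sigma u_\sigma(t)=1$ for some real constants $\alpha_\sigma$, and all first and second moments of $u_w(t)$ are finite, where for $w=\sigma_1\cdots\sigma_k\in\Sigma^+$, $u_w(t)=u_{\sigma_1}(t-k+1)u_{\sigma_2}(t-k+2)\cdots u_{\sigma_k}(t)$. For a process $r(t)\in\mathbb{R}^k$ and $w\in\Sigma^+$ set $z^r_w(t)=r(t-|w|)u_w(t-1)/\sqrt{p_w}$. A fixed set $L\subseteq\Sigma^+$ of admissible words satisfies: $\Sigma\subseteq L$; $u_w(t)=0$ a.s. for $w\notin L$; and there is $S\subseteq\Sigma\times\Sigma$ such that a word $\sigma_1\cdots\sigma_k$ with $k>1$ is in $L$ iff $(\sigma_i,\sigma_{i+1})\in S$ for all $i$.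 A process $r(t)\in\mathbb{R}^k$ is RC (recursive covariance) if: (1) $E[r(t)]=0$, $E[z^r_w(t)]=0$, and $E[r(t)z^r_w(t)^T]$, $E[z^r_w(t)z^r_v(t)^T]$ are finite and independent of $t$ for all $w,v\in\Sigma^+$; write $T^r_{w,v}=E[z^r_w(t)z^r_v(t)^T]$, $\Lambda^r_w=E[r(t)z^r_w(t)^T]$; (2) for $w,v\in\Sigma^+$, $\sigma,\sigma'\in\Sigma$: $T^r_{\sigma,\sigma'}=0$ if $\sigma\neq\sigma'$; $T^r_{w\sigma,v\sigma'}=0$ if $\sigma\ne\sigma'$ and $T^r_{w\sigma,v\sigma}=T^r_{w,v}$ if $w\sigma\in L$ or $v\sigma\in L$; $T^r_{w\sigma,\sigma'}=0$ if $\sigma\neq\sigma'$ and $T^r_{w\sigma,\sigma}=(\Lambda^r_w)^T$; (3) $T^r_{w,v}=0$ if $w\notin L$ or $v\notin L$, and for $\sigma\in\Sigma$, if $w\sigma\in L$ and $v\sigma\notin L$ then $T^r_{v,w}=0$ and $T^r_{w,v}=0$. *)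

From Stdlib Require Import Reals Lra Lia ZArith List.
Import ListNotations.
Open Scope R_scope.

(** * Abstract expectation on a probability space.
    [integrable] is the class of integrable (real) random variables on the
    sample space [Omega], and [E] is the expectation, meaningful on that class. *)
Record is_expectation {Omega : Type}
    (integrable : (Omega -> R) -> Prop) (E : (Omega -> R) -> R) : Prop := {
  int_const : forall c : R, integrable (fun _ => c);
  int_add : forall f g, integrable f -> integrable g ->
            integrable (fun w => f w + g w);
  int_scal : forall (a : R) f, integrable f -> integrable (fun w => a * f w);
  E_const : forall c : R, E (fun _ => c) = c;
  E_add : forall f g, integrable f -> integrable g ->
          E (fun w => f w + g w) = E f + E g;
  E_scal : forall (a : R) f, integrable f -> E (fun w => a * f w) = a * E f;
  E_mono : forall f g, integrable f -> integrable g ->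
           (forall w, f w <= g w) -> E f <= E g
}.

(** [f = 0] almost surely (f square-integrable with E[f^2] = 0). *)
Definition as_zero {Omega : Type} (integrable : (Omega -> R) -> Prop)
  (E : (Omega -> R) -> R) (f : Omega -> R) : Prop :=
  integrable (fun w => f w ^ 2) /\ E (fun w => f w ^ 2) = 0.

Definition sumL {A : Type} (l : list A) (f : A -> R) : R :=
  fold_right (fun a acc => f a + acc) 0 l.

Definition pw {Sigma : Type} (p : Sigma -> R) (w : list Sigma) : R :=
  fold_right (fun s acc => p s * acc) 1 w.

(** u_w(t) = u_{s1}(t-k+1) u_{s2}(t-k+2) ... u_{sk}(t) for w = s1...sk *)
Fixpoint u_word {Omega Sigma : Type} (u : Sigma -> Z -> Omega -> R)
  (w : list Sigma) (t : Z) : Omega -> R :=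
  match w with
  | [] => fun _ => 1
  | s :: w' => fun om => u s (t - Z.of_nat (length w'))%Z om * u_word u w' t om
  end.

Fixpoint pairs_ok {Sigma : Type} (S : Sigma -> Sigma -> Prop) (w : list Sigma)
  : Prop :=
  match w with
  | [] => True
  | a :: w' => match w' with
               | [] => True
               | b :: _ => S a b /\ pairs_ok S w'
               end
  end.

Definition inL {Sigma : Type} (S : Sigma -> Sigma -> Prop) (w : list Sigma)
  : Prop := w <> [] /\ pairs_ok S w.

Definition input_process {Omega Sigma : Type}
  (integrable : (Omega -> R) -> Prop) (E : (Omega -> R) -> R)
  (Senum : list Sigma) (u : Sigma -> Z -> Omega -> R) : Prop :=
  (exists alpha : Sigma -> R, forall t : Z,
      as_zero integrable E
        (fun om => sumL Senum (fun s => alpha s * u s t om) - 1)) /\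
  (forall (w : list Sigma) (t : Z), w <> [] ->
      integrable (u_word u w t) /\ integrable (fun om => u_word u w t om ^ 2)).

(** z^r_w(t) = r(t-|w|) u_w(t-1) / sqrt(p_w), coordinate i;
    the R^k-valued process r is given by its coordinates r t i, i < k. *)
Definition zr {Omega Sigma : Type} (r : Z -> nat -> Omega -> R)
  (u : Sigma -> Z -> Omega -> R) (p : Sigma -> R)
  (w : list Sigma) (t : Z) (i : nat) : Omega -> R :=
  fun om => r (t - Z.of_nat (length w))%Z i om * u_word u w (t - 1)%Z om
            / sqrt (pw p w).

(** T^r_{w,v} (entry i,j), evaluated at t = 0 (time-independent under RC) *)
Definition Tcov {Omega Sigma : Type} (E : (Omega -> R) -> R)
  (r : Z -> nat -> Omega -> R) (u : Sigma -> Z -> Omega -> R) (p : Sigma -> R)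
  (w v : list Sigma) (i j : nat) : R :=
  E (fun om => zr r u p w 0 i om * zr r u p v 0 j om).

Definition Lam {Omega Sigma : Type} (E : (Omega -> R) -> R)
  (r : Z -> nat -> Omega -> R) (u : Sigma -> Z -> Omega -> R) (p : Sigma -> R)
  (w : list Sigma) (i j : nat) : R :=
  E (fun om => r 0%Z i om * zr r u p w 0 j om).

Definition RC {Omega Sigma : Type}
  (integrable : (Omega -> R) -> Prop) (E : (Omega -> R) -> R)
  (S : Sigma -> Sigma -> Prop) (u : Sigma -> Z -> Omega -> R) (p : Sigma -> R)
  (k : nat) (r : Z -> nat -> Omega -> R) : Prop :=
  (forall t i, (i < k)%nat -> integrable (r t i) /\ E (r t i) = 0) /\
  (forall w t i, w <> [] -> (i < k)%nat ->
     integrable (zr r u p w t i) /\ E (zr r u p w t i) = 0) /\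
  (forall w t t' i j, w <> [] -> (i < k)%nat -> (j < k)%nat ->
     integrable (fun om => r t i om * zr r u p w t j om) /\
     E (fun om => r t i om * zr r u p w t j om) =
     E (fun om => r t' i om * zr r u p w t' j om)) /\
  (forall w v t t' i j, w <> [] -> v <> [] -> (i < k)%nat -> (j < k)%nat ->
     integrable (fun om => zr r u p w t i om * zr r u p v t j om) /\
     E (fun om => zr r u p w t i om * zr r u p v t j om) =
     E (fun om => zr r u p w t' i om * zr r u p v t' j om)) /\
  (forall s s' i j, s <> s' -> (i < k)%nat -> (j < k)%nat ->
     Tcov E r u p [s] [s'] i j = 0) /\
  (forall w v s s' i j, w <> [] -> v <> [] -> s <> s' ->
     (i < k)%nat -> (j < k)%nat ->
     Tcov E r u p (w ++ [s]) (v ++ [s']) i j = 0) /\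
  (forall w v s i j, w <> [] -> v <> [] ->
     (inL S (w ++ [s]) \/ inL S (v ++ [s])) ->
     (i < k)%nat -> (j < k)%nat ->
     Tcov E r u p (w ++ [s]) (v ++ [s]) i j = Tcov E r u p w v i j) /\
  (forall w s s' i j, w <> [] -> s <> s' -> (i < k)%nat -> (j < k)%nat ->
     Tcov E r u p (w ++ [s]) [s'] i j = 0) /\
  (forall w s i j, w <> [] -> (i < k)%nat -> (j < k)%nat ->
     Tcov E r u p (w ++ [s]) [s] i j = Lam E r u p w j i) /\
  (forall w v i j, w <> [] -> v <> [] -> (~ inL S w \/ ~ inL S v) ->
     (i < k)%nat -> (j < k)%nat -> Tcov E r u p w v i j = 0) /\
  (forall w v s i j, w <> [] -> v <> [] ->
     inL S (w ++ [s]) -> ~ inL S (v ++ [s]) ->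
     (i < k)%nat -> (j < k)%nat ->
     Tcov E r u p v w i j = 0 /\ Tcov E r u p w v i j = 0).

(* Multiplying z by u_s(t) shifts every word of z by the letter s:
   z u_s(t) = sqrt(p_s) * sum_c a_c z_{w_c s}(t+1).  By the RC relations,
   E[z_{w s} z_{v s}^T] = E[z_w z_v^T] unless neither w s nor v s is admissible,
   in which case it vanishes.  Hence E[z^2] - E[z^2 u_s(t)^2] / p_s equals
   E[z_B^2] >= 0, where z_B keeps only the terms of z whose word cannot be
   extended by s inside L. *)

From Stdlib Require Import Reals ZArith List Lra Lia.
From Stdlib Require Import FunctionalExtensionality ClassicalEpsilon.
Import ListNotations.
Open Scope R_scope.

Lemma sumL_ext {A : Type} (l : list A) (f g : A -> R) :
  (forall x, In x l -> f x = g x) -> sumL l f = sumL l g.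
Proof.
  induction l as [|a l IH]; intros Hfg; simpl; [reflexivity|].
  rewrite Hfg, IH; auto with datatypes.
Qed.

Lemma sumL_sub {A : Type} (l : list A) (f g : A -> R) :
  sumL l (fun x => f x - g x) = sumL l f - sumL l g.
Proof. induction l as [|a l IH]; simpl; [ring|]. rewrite IH; ring. Qed.

Lemma sumL_mult_l {A : Type} (l : list A) (c : R) (f : A -> R) :
  c * sumL l f = sumL l (fun x => c * f x).
Proof. induction l as [|a l IH]; simpl; [ring|]. rewrite <- IH; ring. Qed.

Lemma sumL_mult_r {A : Type} (l : list A) (c : R) (f : A -> R) :
  sumL l f * c = sumL l (fun x => f x * c).
Proof. induction l as [|a l IH]; simpl; [ring|]. rewrite <- IH; ring. Qed.

Definition quadratic_form {A : Type} (l : list A) (c : A -> R) (M : A -> A -> R) : R :=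
  sumL l (fun x => sumL l (fun y => c x * c y * M x y)).

Lemma quadratic_form_sub {A : Type} (l : list A) (c b : A -> R) (M M' : A -> A -> R) :
  (forall x y, In x l -> In y l -> M' x y = M x y - b x * b y * M x y) ->
  quadratic_form l c M' =
  quadratic_form l c M - quadratic_form l (fun x => c x * b x) M.
Proof.
  intros HM. unfold quadratic_form. rewrite <- sumL_sub.
  apply sumL_ext; intros x Hx. rewrite <- sumL_sub.
  apply sumL_ext; intros y Hy. rewrite HM by assumption. ring.
Qed.

Section Expectation.

Context {Omega : Type} (integrable : (Omega -> R) -> Prop) (E : (Omega -> R) -> R).
Hypothesis HE : is_expectation integrable E.

Lemma E_ge0 (f : Omega -> R) : integrable f -> (forall om, 0 <= f om) -> 0 <= E f.
Proof.
  intros Hf Hpos. rewrite <- (E_const _ _ HE 0).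
  apply (E_mono _ _ HE); [apply (int_const _ _ HE) | assumption | assumption].
Qed.

Lemma integrable_lincomb {A : Type} (l : list A) (c : A -> R) (f : A -> Omega -> R) :
  (forall x, In x l -> integrable (f x)) ->
  integrable (fun om => sumL l (fun x => c x * f x om)).
Proof.
  induction l as [|a l IH]; intros Hf; simpl.
  - apply (int_const _ _ HE).
  - apply (int_add _ _ HE (fun om => c a * f a om)); auto with datatypes.
    apply (int_scal _ _ HE); auto with datatypes.
Qed.

Lemma E_lincomb {A : Type} (l : list A) (c : A -> R) (f : A -> Omega -> R) :
  (forall x, In x l -> integrable (f x)) ->
  E (fun om => sumL l (fun x => c x * f x om)) = sumL l (fun x => c x * E (f x)).
Proof.
  induction l as [|a l IH]; intros Hf; simpl.
  - apply (E_const _ _ HE).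
  - assert (Hca : integrable (fun om => c a * f a om))
      by (apply (int_scal _ _ HE); auto with datatypes).
    rewrite (E_add _ _ HE _ _ Hca), (E_scal _ _ HE), IH;
      auto using integrable_lincomb with datatypes.
Qed.

Section Square.

Variables (A : Type) (l : list A) (f : A -> Omega -> R).
Hypothesis Hff : forall x y, In x l -> In y l -> integrable (fun om => f x om * f y om).

Lemma square_lincomb_expand (c : A -> R) om :
  sumL l (fun x => c x * f x om) ^ 2 =
  sumL l (fun x => c x * sumL l (fun y => c y * (f x om * f y om))).
Proof.
  rewrite <- Rsqr_pow2; unfold Rsqr. rewrite sumL_mult_r.
  apply sumL_ext; intros x _.
  rewrite Rmult_assoc, sumL_mult_l. f_equal.
  apply sumL_ext; intros y _. ring.
Qed.

Let integrable_row (c : A -> R) x : In x l ->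
  integrable (fun om => sumL l (fun y => c y * (f x om * f y om))).
Proof.
  intros Hx. apply (integrable_lincomb _ _ (fun y om => f x om * f y om)); auto.
Qed.

Lemma integrable_square_lincomb (c : A -> R) :
  integrable (fun om => sumL l (fun x => c x * f x om) ^ 2).
Proof.
  rewrite (functional_extensionality _ _ (square_lincomb_expand c)).
  apply (integrable_lincomb _ _ (fun x om => sumL l (fun y => c y * (f x om * f y om)))).
  exact (integrable_row c).
Qed.

Lemma E_square_lincomb (c : A -> R) :
  E (fun om => sumL l (fun x => c x * f x om) ^ 2) =
  quadratic_form l c (fun x y => E (fun om => f x om * f y om)).
Proof.
  rewrite (functional_extensionality _ _ (square_lincomb_expand c)).
  rewrite (E_lincomb _ _ (fun x om => sumL l (fun y => c y * (f x om * f y om))))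
    by exact (integrable_row c).
  apply sumL_ext; intros x Hx.
  rewrite (E_lincomb _ _ (fun y om => f x om * f y om)) by auto.
  rewrite sumL_mult_l. apply sumL_ext; intros y _. ring.
Qed.

Lemma quadratic_form_gram_ge0 (c : A -> R) :
  0 <= quadratic_form l c (fun x y => E (fun om => f x om * f y om)).
Proof.
  rewrite <- E_square_lincomb.
  apply E_ge0; [apply integrable_square_lincomb | intros; apply pow2_ge_0].
Qed.

End Square.

End Expectation.

Lemma u_word_snoc {Omega Sigma : Type} (u : Sigma -> Z -> Omega -> R)
  (w : list Sigma) (s : Sigma) (t : Z) (om : Omega) :
  u_word u (w ++ [s]) t om = u_word u w (t - 1) om * u s t om.
Proof.
  induction w as [|a w IH]; simpl.
  - rewrite Z.sub_0_r. ring.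
  - rewrite IH, length_app.
    replace (t - Z.of_nat (length w + length [s]))%Z
      with (t - 1 - Z.of_nat (length w))%Z by (simpl length; lia).
    ring.
Qed.

Lemma pw_snoc {Sigma : Type} (p : Sigma -> R) (w : list Sigma) (s : Sigma) :
  pw p (w ++ [s]) = pw p w * p s.
Proof.
  induction w as [|a w IH]; unfold pw in *; simpl; [ring|]. rewrite IH. ring.
Qed.

Lemma pw_gt0 {Sigma : Type} (p : Sigma -> R) (w : list Sigma) :
  (forall s, 0 < p s) -> 0 < pw p w.
Proof.
  intros Hp. induction w as [|a w IH]; unfold pw in *; simpl; [lra|].
  apply Rmult_lt_0_compat; auto.
Qed.

Lemma zr_mul_input {Omega Sigma : Type} (r : Z -> nat -> Omega -> R)
  (u : Sigma -> Z -> Omega -> R) (p : Sigma -> R) (w : list Sigma)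
  (s : Sigma) (t : Z) (i : nat) (om : Omega) :
  (forall s, 0 < p s) ->
  zr r u p w t i om * u s t om = sqrt (p s) * zr r u p (w ++ [s]) (t + 1) i om.
Proof.
  intros Hp. unfold zr.
  rewrite u_word_snoc, pw_snoc, sqrt_mult, length_app
    by (left; auto using pw_gt0).
  replace (t + 1 - 1)%Z with t by lia.
  replace (t + 1 - Z.of_nat (length w + length [s]))%Z
    with (t - Z.of_nat (length w))%Z by (simpl length; lia).
  assert (0 < sqrt (pw p w)) by (apply sqrt_lt_R0, pw_gt0; assumption).
  assert (0 < sqrt (p s)) by (apply sqrt_lt_R0; auto).
  field; lra.
Qed.

Lemma lincomb_zr_mul_input {Omega Sigma A : Type} (r : Z -> nat -> Omega -> R)
  (u : Sigma -> Z -> Omega -> R) (p : Sigma -> R) (l : list A) (a : A -> R)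
  (w : A -> list Sigma) (i : A -> nat) (s : Sigma) (t : Z) (om : Omega) :
  (forall s, 0 < p s) ->
  sumL l (fun x => a x * zr r u p (w x) t (i x) om) * u s t om =
  sqrt (p s) * sumL l (fun x => a x * zr r u p (w x ++ [s]) (t + 1) (i x) om).
Proof.
  intros Hp. rewrite sumL_mult_r, sumL_mult_l. apply sumL_ext; intros x _.
  rewrite Rmult_assoc, zr_mul_input by assumption. ring.
Qed.

Definition blocked {Sigma : Type} (S : Sigma -> Sigma -> Prop) (s : Sigma)
  (w : list Sigma) : R :=
  if excluded_middle_informative (inL S (w ++ [s])) then 0 else 1.

Lemma snoc_neq_nil {A : Type} (w : list A) (a : A) : w ++ [a] <> [].
Proof. intros H. apply app_eq_nil in H. destruct H as [_ H]. discriminate. Qed.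

Section RCProcess.

Context {Omega Sigma : Type} (integrable : (Omega -> R) -> Prop)
  (E : (Omega -> R) -> R) (S : Sigma -> Sigma -> Prop)
  (u : Sigma -> Z -> Omega -> R) (p : Sigma -> R) (k : nat)
  (r : Z -> nat -> Omega -> R).
Hypothesis Hr : RC integrable E S u p k r.

Lemma RC_integrable_zr_mul w v t i j :
  w <> [] -> v <> [] -> (i < k)%nat -> (j < k)%nat ->
  integrable (fun om => zr r u p w t i om * zr r u p v t j om).
Proof. intros. apply (proj1 (proj2 (proj2 (proj2 Hr))) w v t 0%Z); auto. Qed.

Lemma RC_integrable_zr_gram {A : Type} (l : list A) (w : A -> list Sigma)
  (i : A -> nat) t :
  (forall x, In x l -> w x <> [] /\ (i x < k)%nat) ->
  forall x y, In x l -> In y l ->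
  integrable (fun om => zr r u p (w x) t (i x) om * zr r u p (w y) t (i y) om).
Proof.
  intros Hl x y Hx Hy. destruct (Hl x Hx), (Hl y Hy).
  apply RC_integrable_zr_mul; assumption.
Qed.

Lemma RC_E_zr_mul w v t i j :
  w <> [] -> v <> [] -> (i < k)%nat -> (j < k)%nat ->
  E (fun om => zr r u p w t i om * zr r u p v t j om) = Tcov E r u p w v i j.
Proof. intros. apply (proj1 (proj2 (proj2 (proj2 Hr))) w v t 0%Z); auto. Qed.

Lemma RC_Tcov_snoc w v s i j :
  w <> [] -> v <> [] -> (i < k)%nat -> (j < k)%nat ->
  Tcov E r u p (w ++ [s]) (v ++ [s]) i j =
  Tcov E r u p w v i j - blocked S s w * blocked S s v * Tcov E r u p w v i j.
Proof.
  destruct Hr as (_ & _ & _ & _ & _ & _ & Hshift & _ & _ & Hout & _).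
  intros Hw Hv Hi Hj. unfold blocked.
  destruct (excluded_middle_informative (inL S (w ++ [s]))) as [Lw|Lw];
  destruct (excluded_middle_informative (inL S (v ++ [s]))) as [Lv|Lv].
  1-3: rewrite Hshift by auto; ring.
  rewrite Hout by auto using snoc_neq_nil. ring.
Qed.

End RCProcess.

Theorem mainTheorem2
  (Omega : Type) (integrable : (Omega -> R) -> Prop) (E : (Omega -> R) -> R)
  (HE : is_expectation integrable E)
  (Sigma : Type) (Senum : list Sigma)
  (HSenum : forall s : Sigma, In s Senum) (HSnodup : NoDup Senum)
  (p : Sigma -> R) (Hp : forall s, 0 < p s)
  (u : Sigma -> Z -> Omega -> R)
  (Hu : input_process integrable E Senum u)
  (S : Sigma -> Sigma -> Prop)
  (HL : forall (w : list Sigma) (t : Z), w <> [] -> ~ inL S w ->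
          as_zero integrable E (u_word u w t))
  (k : nat) (r : Z -> nat -> Omega -> R)
  (Hr : RC integrable E S u p k r)
  (t : Z) (s : Sigma) (cs : list (list Sigma * nat * R))
  (Hcs : forall c, In c cs -> inL S (fst (fst c)) /\ (snd (fst c) < k)%nat) :
  let z := fun om => sumL cs (fun c => snd c * zr r u p (fst (fst c)) t (snd (fst c)) om) in
  integrable (fun om => z om ^ 2 * u s t om ^ 2) /\
  E (fun om => z om ^ 2 * u s t om ^ 2) <= p s * E (fun om => z om ^ 2).
Proof.
  intros z.
  pose (f (c : list Sigma * nat * R) := zr r u p (fst (fst c)) t (snd (fst c))).
  pose (g (c : list Sigma * nat * R) := zr r u p (fst (fst c) ++ [s]) (t + 1) (snd (fst c))).
  assert (Hc : forall c, In c cs -> fst (fst c) <> [] /\ (snd (fst c) < k)%nat)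
    by (intros c Hin; destruct (Hcs c Hin) as [[? _] ?]; auto).
  assert (Hc_snoc : forall c, In c cs -> fst (fst c) ++ [s] <> [] /\ (snd (fst c) < k)%nat)
    by (intros c Hin; split; [apply snoc_neq_nil | apply Hc, Hin]).
  pose proof (RC_integrable_zr_gram _ _ _ _ _ _ _ Hr cs _ _ t Hc) as Hff.
  pose proof (RC_integrable_zr_gram _ _ _ _ _ _ _ Hr cs _ _ (t + 1) Hc_snoc) as Hgg.
  assert (Hzu : forall om, z om ^ 2 * u s t om ^ 2 =
                           p s * sumL cs (fun c => snd c * g c om) ^ 2).
  { intros om.
    replace (z om ^ 2 * u s t om ^ 2) with ((z om * u s t om) ^ 2) by ring.
    unfold z. rewrite (lincomb_zr_mul_input r u p cs snd _ _ s t om Hp).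
    rewrite Rpow_mult_distr, pow2_sqrt by (left; auto). reflexivity. }
  rewrite (functional_extensionality _ _ Hzu).
  split; [apply (int_scal _ _ HE), (integrable_square_lincomb _ _ HE); exact Hgg|].
  rewrite (E_scal _ _ HE) by exact (integrable_square_lincomb _ _ HE _ _ _ Hgg _).
  apply Rmult_le_compat_l; [left; auto|].
  change (fun om => z om ^ 2) with (fun om => sumL cs (fun c => snd c * f c om) ^ 2).
  rewrite !(E_square_lincomb _ _ HE) by assumption.
  rewrite (quadratic_form_sub _ _ (fun c => blocked S s (fst (fst c)))
             (fun x y => E (fun om => f x om * f y om))).
  - pose proof (quadratic_form_gram_ge0 _ _ HE _ cs f Hff
                  (fun c => snd c * blocked S s (fst (fst c)))).
    lra.
  - intros x y Hx Hy. destruct (Hc x Hx), (Hc y Hy). unfold f, g.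
    rewrite !(RC_E_zr_mul _ _ S u p k r Hr) by auto using snoc_neq_nil.
    apply (RC_Tcov_snoc _ _ _ _ _ _ _ Hr); assumption.
Qed.
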